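(* Let $\mathbf{t}$ be the Tribonacci sequence, fixed point of $0\mapsto01$, $1\mapsto02$, $2\mapsto0$. For each $k\ge1$, the sequence $\mathbf{t}$ is totally $(k,1)$-unbalanced.
   Context: For positive integers $k,C$, a sequence $\mathbf{x}$ is totally $(k,C)$-unbalanced if for every length-$k$ factor $w$ of $\mathbf{x}$ there exist two factors $u,v$ of $\mathbf{x}$ with $|u|=|v|$ and $||u|_w-|v|_w|>C$, where $|u|_w$ is the number of (possibly overlapping) occurrences of $w$ in $u$. *)

From mathcomp Require Import all_boot all_order all_algebra.
Set Implicit Arguments. Unset Strict Implicit. Unset Printing Implicit Defensive.

Definition factor (x : nat -> nat) (w : seq nat) : Prop :=
  exists i, w = mkseq (fun j => x (i + j)) (size w).

Definition occ (u w : seq nat) : nat :=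
  count (fun i => (i + size w <= size u) && (take (size w) (drop i u) == w))
        (iota 0 (size u).+1).

Definition totally_unbalanced (x : nat -> nat) (k C : nat) : Prop :=
  forall w : seq nat, size w = k -> factor x w ->
    exists u v : seq nat,
      [/\ factor x u, factor x v, size u = size v &
          (C < `|occ u w - occ v w|)%N].

Definition trib_sigma (a : nat) : seq nat :=
  match a with 0 => [:: 0; 1] | 1 => [:: 0; 2] | _ => [:: 0] end.

Definition trib_iter (n : nat) : seq nat :=
  iter n (fun s => flatten (map trib_sigma s)) [:: 0].

(* The Tribonacci word t = lim sigma^n(0); sigma^(i+1)(0) has length > i. *)
Definition tribonacci (i : nat) : nat := nth 0 (trib_iter i.+1) i.

(* Every factor w of t is synchronized with a power of sigma: there are n > 0
   and a word x such that w occurs in t exactly at the positions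
   |sigma^n(t_0 ... t_(i-1))| + |x|, i >= 0.  Here block_start j, the length of
   sigma(t_0 ... t_(j-1)), is the position where the block sigma(t_j) starts in
   t = sigma(t).  Synchronization is proved by desubstitution: a factor
   starting with 0 is sigma(w') or sigma(w') 0 for a shorter factor w' whose
   occurrences it inherits, and a letter 1 or 2 is always preceded by 0.
   Hence the window of t running from the i-th to the (i+d)-th occurrence of w
   contains exactly d + 1 occurrences, and its length is governed by
   |sigma^n(t_i ... t_(i+d-1))|.  Since |sigma^n(2)| < |sigma^n(1)| <= |sigma^n(0)|,
   the images of t_23 ... t_27 = 20102 and t_4 ... t_8 = 01001 differ in length
   by at least 2, so two windows of equal length contain 6 and at most 4
   occurrences of w. *)

From mathcomp Require Import all_boot all_order all_algebra.
From mathcomp Require Import zify.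
Set Implicit Arguments. Unset Strict Implicit. Unset Printing Implicit Defensive.

Lemma count_iota_from (Q : pred nat) p L :
  count Q (iota p L) = count Q (iota 0 (p + L)) - count Q (iota 0 p).
Proof. by rewrite iotaD count_cat add0n addKn. Qed.

Lemma count_iota_mono (Q : pred nat) p L M : L <= M ->
  count Q (iota p L) <= count Q (iota p M).
Proof. by move=> /subnKC <-; rewrite iotaD count_cat leq_addr. Qed.

Section Windows.
Variable x : nat -> nat.

Definition window p L := mkseq (fun j => x (p + j)) L.

Lemma size_window p L : size (window p L) = L.
Proof. exact: size_mkseq. Qed.

Lemma nth_window p L j : j < L -> nth 0 (window p L) j = x (p + j).
Proof. exact: nth_mkseq. Qed.

Lemma factor_window p L : factor x (window p L).
Proof. by exists p; rewrite size_window. Qed.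

Lemma take_window p L M : take M (window p L) = window p (minn M L).
Proof. by rewrite /window /mkseq -map_take take_iota. Qed.

Lemma drop_window p L M : drop M (window p L) = window (p + M) (L - M).
Proof.
rewrite /window /mkseq -map_drop drop_iota add0n -[M]addn0 iotaDl -map_comp.
by apply: eq_map => j /=; rewrite addn0 addnA.
Qed.

Lemma windowD p L M : window p (L + M) = window p L ++ window (p + L) M.
Proof.
rewrite -{1}(cat_take_drop L (window p (L + M))).
by rewrite take_window drop_window (minn_idPl (leq_addr _ _)) addKn.
Qed.

Lemma window1 p : window p 1 = [:: x p].
Proof. by rewrite /window /mkseq /= addn0. Qed.

Lemma window_cons p L : window p L.+1 = x p :: window p.+1 L.
Proof. by rewrite -add1n windowD window1 addn1. Qed.

Lemma head_window p L : head 0 (window p L) <= x p.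
Proof. by case: L => // L; rewrite /window /mkseq /= addn0. Qed.

Lemma window_prefix p s r : window p (size (s ++ r)) = s ++ r -> window p (size s) = s.
Proof.
move=> sr; have := congr1 (take (size s)) sr.
by rewrite take_window size_cat (minn_idPl (leq_addr _ _)) take_size_cat.
Qed.

Lemma window_suffix p s r :
  window p (size (s ++ r)) = s ++ r -> window (p + size s) (size r) = r.
Proof.
move=> sr; have := congr1 (drop (size s)) sr.
by rewrite drop_window size_cat addKn drop_size_cat.
Qed.

Definition occurs_at w p := window p (size w) == w.

Lemma occ_window w p L : size w <= L ->
  occ (window p L) w = count (occurs_at w) (iota p (L - size w).+1).
Proof.
move=> wL; rewrite /occ size_window.
have -> : L.+1 = (L - size w).+1 + size w by lia.
rewrite iotaD count_cat add0n.
rewrite [count _ (iota _ (size w))](eq_in_count (a2 := pred0)) ?count_pred0; last first.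
  by move=> i; rewrite mem_iota => /andP [? _] /=; apply/negbTE; lia.
rewrite addn0 -[p]addn0 iotaDl count_map.
apply: eq_in_count => i; rewrite mem_iota add0n => /andP [_ iL] /=.
have -> : i + size w <= L by lia.
have -> : L = i + (size w + (L - i - size w)) by lia.
by rewrite !windowD drop_size_cat ?size_window // take_size_cat ?size_window // addn0.
Qed.

Section Occurrences.
Variables (w : seq nat) (F : nat -> nat) (c : nat).
Hypothesis F_incr : forall i, F i < F i.+1.
Hypothesis occurs_atE : forall p, occurs_at w p <-> exists i, p = F i + c.

Let F_mono : {mono F : i j / i <= j}.
Proof. by apply: leq_mono; apply: homo_ltn F_incr; apply: ltn_trans. Qed.

Lemma count_occurs_before i : count (occurs_at w) (iota 0 (F i + c)) = i.
Proof.
have no_occ lo n : (forall j, lo <= F j + c < lo + n -> False) ->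
    count (occurs_at w) (iota lo n) = 0.
  move=> none; apply/eqP; rewrite -leqn0 leqNgt -has_count; apply/hasPn => y.
  rewrite mem_iota => yin; apply/negP => /occurs_atE [j yE].
  by apply: (none j); rewrite -yE.
elim: i => [|i IHi].
  by apply: no_occ => j; have := F_mono 0 j; lia.
have F_gap : F i.+1 + c = (F i + c).+1 + (F i.+1 - F i).-1.
  by have := F_incr i; lia.
have occ_i : occurs_at w (F i + c) by apply/occurs_atE; exists i.
rewrite F_gap iotaD count_cat -addn1 iotaD count_cat IHi /= occ_i.
rewrite no_occ ?addn0 ?addn1 //.
by move=> j; have := F_mono j i; have := F_mono i.+1 j; lia.
Qed.

Lemma count_occurs_upto i : count (occurs_at w) (iota 0 (F i + c).+1) = i.+1.
Proof.
have occ_i : occurs_at w (F i + c) by apply/occurs_atE; exists i.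
rewrite -addn1 iotaD count_cat count_occurs_before /= occ_i addn0.
exact: addn1.
Qed.

Lemma unbalanced_of_gap a b d : F (a + d) - F a + 2 <= F (b + d) - F b ->
  exists u v, [/\ factor x u, factor x v, size u = size v &
                  (1 < `|occ u w - occ v w|)%N].
Proof.
move=> gap; have d_gt0 : 0 < d by case: d gap => //; rewrite !addn0 !subnn.
set l := F (a + d) - F a.
have Fa_le : F a <= F (a + d) by rewrite F_mono leq_addr.
have Fb_le : F b <= F (b + d) by rewrite F_mono leq_addr.
exists (window (F a + c) (l + size w)), (window (F b + c).+1 (l + size w)).
split; [exact: factor_window | exact: factor_window | by rewrite !size_window |].
have occ_u : occ (window (F a + c) (l + size w)) w = d.+1.
  rewrite occ_window ?leq_addl // addnK count_iota_from.
  have -> : F a + c + l.+1 = (F (a + d) + c).+1 by rewrite /l; lia.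
  by rewrite count_occurs_upto count_occurs_before; lia.
have occ_v : occ (window (F b + c).+1 (l + size w)) w <= d.-1.
  rewrite occ_window ?leq_addl // addnK.
  have l_lt : l.+1 <= F (b + d) + c - (F b + c).+1 by lia.
  apply: leq_trans (count_iota_mono _ _ l_lt) _.
  rewrite count_iota_from.
  have -> : (F b + c).+1 + (F (b + d) + c - (F b + c).+1) = F (b + d) + c by lia.
  by rewrite count_occurs_before count_occurs_upto; lia.
rewrite occ_u distnEl; lia.
Qed.
End Occurrences.
End Windows.

Notation tw := (window tribonacci).

Definition sigma (s : seq nat) : seq nat := flatten (map trib_sigma s).

Lemma sigma_cat s r : sigma (s ++ r) = sigma s ++ sigma r.
Proof. by rewrite /sigma map_cat flatten_cat. Qed.

Lemma sigma_cons a s : sigma (a :: s) = trib_sigma a ++ sigma s.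
Proof. by []. Qed.

Lemma sigma1 a : sigma [:: a] = trib_sigma a.
Proof. exact: cats0. Qed.

Lemma size_trib_sigma a : size (trib_sigma a) = (a < 2).+1.
Proof. by case: a => [|[|a]]. Qed.

Lemma size_sigma s : size s <= size (sigma s).
Proof.
by elim: s => // a s IHs; rewrite sigma_cons size_cat size_trib_sigma /=; lia.
Qed.

Lemma trib_iterS m : trib_iter m.+1 = sigma (trib_iter m).
Proof. exact: iterS. Qed.

Lemma trib_iter_head m : exists s, trib_iter m = 0 :: s.
Proof.
elim: m => [|m [s IHm]]; first by exists [::].
by rewrite trib_iterS IHm; eexists.
Qed.

Lemma size_trib_iter m : m < size (trib_iter m).
Proof.
elim: m => // m IHm; have [s sE] := trib_iter_head m.
rewrite trib_iterS sE sigma_cons size_cat; rewrite sE in IHm.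
by have := size_sigma s; rewrite /= in IHm *; lia.
Qed.

Lemma trib_iter_prefix m d : exists r, trib_iter (m + d) = trib_iter m ++ r.
Proof.
elim: m => [|m [r IHm]]; first by have [r rE] := trib_iter_head d; exists r.
by rewrite addSn !trib_iterS IHm sigma_cat; eexists.
Qed.

Lemma nth_trib_iter m i : i < size (trib_iter m) ->
  tribonacci i = nth 0 (trib_iter m) i.
Proof.
move=> im; have i_lt := size_trib_iter i.+1.
have [r1 E1] := trib_iter_prefix m i.+1; have [r2 E2] := trib_iter_prefix i.+1 m.
have : nth 0 (trib_iter i.+1 ++ r2) i = nth 0 (trib_iter m ++ r1) i.
  by rewrite -E2 addnC E1.
by rewrite !nth_cat im (ltnW i_lt).
Qed.

Lemma window_trib_iter m p L : p + L <= size (trib_iter m) ->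
  tw p L = take L (drop p (trib_iter m)).
Proof.
move=> pL; apply: (@eq_from_nth _ 0) => [|i]; rewrite size_window.
  by rewrite size_take size_drop; case: ltnP; lia.
move=> iL; rewrite nth_window // nth_take // nth_drop (nth_trib_iter (m := m)) //; lia.
Qed.

Lemma all_trib_iter_le2 m : all (leq^~ 2) (trib_iter m).
Proof.
elim: m => // m; rewrite trib_iterS.
elim: (trib_iter m) => //= a s IHs /andP [a_le2 s_le2].
by rewrite sigma_cons all_cat IHs // andbT; case: a a_le2 => [|[|[|a]]].
Qed.

Lemma tribonacci_le2 i : tribonacci i <= 2.
Proof.
have /allP := all_trib_iter_le2 i.+1; apply; apply: mem_nth.
exact: ltnW (size_trib_iter i.+1).
Qed.

Lemma all_window_le2 p L : all (leq^~ 2) (tw p L).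
Proof. by apply/allP => a /mapP [j _ ->]; apply: tribonacci_le2. Qed.

Definition block_start j := size (sigma (tw 0 j)).

Lemma sigma_prefix j : tw 0 (block_start j) = sigma (tw 0 j).
Proof.
have j_lt := size_trib_iter j.
have tw0j : tw 0 j = take j (trib_iter j).
  by rewrite (window_trib_iter (m := j)) ?drop0 // ltnW.
have tw_next : tw 0 (size (trib_iter j.+1)) = trib_iter j.+1.
  by rewrite (window_trib_iter (m := j.+1)) // drop0 take_size.
rewrite trib_iterS -(cat_take_drop j (trib_iter j)) sigma_cat -tw0j in tw_next.
exact: window_prefix tw_next.
Qed.

Lemma block_startD j L : block_start (j + L) = block_start j + size (sigma (tw j L)).
Proof. by rewrite /block_start windowD sigma_cat size_cat. Qed.

Lemma window_block_start j L :
  tw (block_start j) (size (sigma (tw j L))) = sigma (tw j L).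
Proof.
have := congr1 (drop (block_start j)) (sigma_prefix (j + L)).
by rewrite drop_window add0n block_startD addKn windowD sigma_cat drop_size_cat.
Qed.

Lemma block_startS q :
  block_start q.+1 = block_start q + size (trib_sigma (tribonacci q)).
Proof. by rewrite -addn1 block_startD window1 sigma1. Qed.

Lemma window_block q :
  tw (block_start q) (size (trib_sigma (tribonacci q))) = trib_sigma (tribonacci q).
Proof. by have := window_block_start q 1; rewrite window1 sigma1. Qed.

Lemma block_start_incr q : block_start q < block_start q.+1.
Proof. by rewrite block_startS size_trib_sigma addnS ltnS leq_addr. Qed.

Lemma block_start_mono : {mono block_start : i j / i <= j}.
Proof. by apply: leq_mono; apply: homo_ltn block_start_incr; apply: ltn_trans. Qed.

Lemma tribonacci_block_start q : tribonacci (block_start q) = 0.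
Proof.
have := congr1 (nth 0 ^~ 0) (window_block q).
rewrite nth_window ?addn0 => [->|]; last by rewrite size_trib_sigma.
by case: (tribonacci q) => [|[|]].
Qed.

Lemma window_block_next q :
  tw (block_start q) (size (trib_sigma (tribonacci q))).+1 =
  trib_sigma (tribonacci q) ++ [:: 0].
Proof.
by rewrite -addn1 windowD window_block -block_startS window1 tribonacci_block_start.
Qed.

Lemma block_start_cover p : exists q, block_start q <= p < block_start q.+1.
Proof.
elim: p => [|p [q /andP [qp pq]]]; first by exists 0; rewrite (block_start_incr 0).
case: (ltnP p.+1 (block_start q.+1)) => [|qp1]; first by exists q; rewrite ltnW ?qp.
by exists q.+1; have := block_startS q.+1; rewrite size_trib_sigma; lia.
Qed.

Lemma tribonacci_block_next q :
  tribonacci (block_start q).+1 = nth 0 (trib_sigma (tribonacci q) ++ [:: 0]) 1.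
Proof.
have := congr1 (nth 0 ^~ 1) (window_block_next q).
by rewrite nth_window ?size_trib_sigma // addn1.
Qed.

Lemma block_start_or_next p :
  exists q, p = block_start q \/ p = (block_start q).+1 /\ tribonacci q < 2.
Proof.
have [q /andP [qp pq]] := block_start_cover p; exists q.
by move: pq; rewrite block_startS size_trib_sigma; case: ltnP; lia.
Qed.

Lemma block_startP p : tribonacci p = 0 -> exists q, p = block_start q.
Proof.
have [q [->|[-> tq_lt2]]] := block_start_or_next p; first by exists q.
by rewrite tribonacci_block_next; case: (tribonacci q) tq_lt2 => [|[|]].
Qed.

Lemma tribonacci_gt0 p : 0 < tribonacci p -> exists q, p = (block_start q).+1.
Proof.
have [q [->|[-> _]]] := block_start_or_next p; last by exists q.
by rewrite tribonacci_block_start.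
Qed.

Lemma take2_trib_sigma_inj a b : a <= 2 -> b <= 2 ->
  take 2 (trib_sigma a ++ [:: 0]) = take 2 (trib_sigma b ++ [:: 0]) -> a = b.
Proof. by case: a => [|[|[|a]]] //; case: b => [|[|[|b]]]. Qed.

Lemma sigma_cons_prefix a w1 (e : bool) : e || (last 2 (a :: w1) < 2) ->
  exists r, sigma (a :: w1) ++ nseq e 0 = take 2 (trib_sigma a ++ [:: 0]) ++ r.
Proof.
rewrite sigma_cons; case: a => [|[|a]] cond; try by eexists.
case: w1 cond => [|b w1]; first by case: e => //; exists [::].
by rewrite sigma_cons; case: b => [|[|b]]; eexists.
Qed.

(* A window starting at a block start is a run of whole blocks sigma(w1),
   possibly followed by the 0 opening the next block (e = true); otherwise the
   last block must have two letters, so that it determines the last letter of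
   w1 (for w1 = [::] the default 2 of last forces e = true). *)
Lemma window_desubst q w1 (e : bool) : all (leq^~ 2) w1 -> e || (last 2 w1 < 2) ->
  tw (block_start q) (size (sigma w1 ++ nseq e 0)) = sigma w1 ++ nseq e 0 ->
  tw q (size w1) = w1.
Proof.
elim: w1 q => // a w1 IHw1 q /andP [a_le2 w1_le2] cond occ.
have tq : tribonacci q = a.
  apply: take2_trib_sigma_inj (tribonacci_le2 q) a_le2 _.
  have [r rE] := sigma_cons_prefix cond; rewrite rE in occ.
  have size2 : size (take 2 (trib_sigma a ++ [:: 0])) = 2 by case: (a) => [|[|]].
  rewrite -(window_prefix occ) size2 -window_block_next take_window.
  by congr tw; rewrite size_trib_sigma; lia.
case: w1 IHw1 w1_le2 cond occ => [|b w1] IHw1 w1_le2 cond occ.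
  by rewrite window1 tq.
rewrite window_cons tq; congr cons; apply: IHw1 => //.
rewrite block_startS tq; apply: window_suffix.
by rewrite catA; exact: occ.
Qed.

Lemma window_block_decomposition p m : tribonacci p = 0 -> 0 < m ->
  exists q w1 (e : bool), [/\ p = block_start q, tw q (size w1) = w1,
    tw p m = sigma w1 ++ nseq e 0, e || (last 2 w1 < 2) & size w1 < m].
Proof.
move=> tp0 m_gt0; have [q ->] := block_startP tp0.
have [r [rE|[rE tr_lt2]]] := block_start_or_next (block_start q + m.-1).
- have qr : q <= r by rewrite -block_start_mono -rE leq_addr.
  have bsr := block_startD q (r - q); rewrite subnKC // in bsr.
  have := size_sigma (tw q (r - q)); rewrite size_window => size_le.
  exists q, (tw q (r - q)), true; rewrite size_window; split => //; last by lia.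
  rewrite -(prednK m_gt0) -addn1 windowD rE window1 tribonacci_block_start.
  have -> : m.-1 = size (sigma (tw q (r - q))) by lia.
  by rewrite window_block_start.
- have bsr1 := block_startS r; rewrite size_trib_sigma tr_lt2 in bsr1.
  have qr : q <= r.
    by rewrite leqNgt; apply/negP; rewrite -block_start_mono; lia.
  have bsr := block_startD q (r.+1 - q); rewrite subnKC ?leqW // in bsr.
  have := size_sigma (tw q (r - q)); rewrite size_window => size_le.
  have := block_startD q (r - q); rewrite subnKC // => bsr0.
  exists q, (tw q (r.+1 - q)), false; rewrite size_window cats0; split => //.
  + have -> : m = size (sigma (tw q (r.+1 - q))) by lia.
    exact: window_block_start.
  + by rewrite subSn // -[(r - q).+1]addn1 windowD window1 last_cat /= subnKC.
  + lia.
Qed.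

Definition synchronized n x w :=
  (forall i, tw (iter n block_start i) (size x + size w) = x ++ w) /\
  (forall p, tw p (size w) = w -> exists i, p = iter n block_start i + size x).

Lemma synchronized_nil : synchronized 0 [::] [::].
Proof. by split=> // p _; exists p; rewrite addn0. Qed.

Lemma sigma_nseq_head w1 (e : bool) : e || (last 2 w1 < 2) ->
  exists r, sigma w1 ++ nseq e 0 = 0 :: r.
Proof.
case: w1 => [|a w1]; first by case: e => //; exists [::].
by rewrite sigma_cons; case: a => [|[|a]]; eexists.
Qed.

Lemma synchronized_sigma n x w1 (e : bool) : all (leq^~ 2) w1 -> e || (last 2 w1 < 2) ->
  synchronized n x w1 -> synchronized n.+1 (sigma x) (sigma w1 ++ nseq e 0).
Proof.
move=> w1_le2 cond [occ_at occ_only]; split=> [i|p occ_p].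
  rewrite iterS; set j := iter n block_start i.
  have := window_block_start j (size x + size w1); rewrite occ_at sigma_cat => occ_xw.
  have := block_startD j (size x + size w1); rewrite occ_at sigma_cat => bs_end.
  rewrite size_cat addnA -size_cat windowD occ_xw -bs_end catA; congr (_ ++ _).
  by case: (e); rewrite //= window1 tribonacci_block_start.
have [q pE] : exists q, p = block_start q.
  apply: block_startP; have [r rE] := sigma_nseq_head cond.
  by move: occ_p; rewrite rE window_cons => -[].
rewrite pE in occ_p; have [i qE] := occ_only q (window_desubst w1_le2 cond occ_p).
exists i; rewrite pE qE iterS block_startD.
by have := occ_at i; rewrite -size_cat => /window_prefix ->.
Qed.

Lemma synchronized_behead n x a w : 0 < a ->
  synchronized n x [:: 0, a & w] -> synchronized n (rcons x 0) (a :: w).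
Proof.
move=> a_gt0 [occ_at occ_only]; split=> [i|p occ_p].
  by rewrite size_rcons addSnnS cat_rcons; apply: occ_at.
have t_p : tribonacci p = a by move: occ_p; rewrite window_cons => -[].
have [q pE] : exists q, p = (block_start q).+1 by apply: tribonacci_gt0; rewrite t_p.
have [i qE] : exists i, block_start q = iter n block_start i + size x.
  by apply: occ_only; rewrite window_cons tribonacci_block_start -pE occ_p.
by exists i; rewrite pE qE size_rcons addnS.
Qed.

Lemma factor_synchronized w : factor tribonacci w ->
  exists n x, (w != [::] -> 0 < n) /\ synchronized n x w.
Proof.
(* A word c :: w with c > 0 is reduced to 0 :: c :: w, whose preimage may be as
   long as c :: w but starts with a letter smaller than c. *)
move=> [p0 wE]; have [N] := ubnP (3 * size w + head 0 w).
elim: N w p0 wE => // N IHN [|c w] p0 wE measure.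
  by exists 0, [::]; split=> //; exact: synchronized_nil.
have occ0 : tw p0 (size (c :: w)) = c :: w := esym wE.
have sync_sigma q w1 (e : bool) : tw q (size w1) = w1 -> e || (last 2 w1 < 2) ->
    3 * size w1 + head 0 w1 < N ->
    exists n x, 0 < n /\ synchronized n x (sigma w1 ++ nseq e 0).
  move=> occ_w1 cond lt_N; have [n [x [_ sync]]] := IHN w1 q (esym occ_w1) lt_N.
  exists n.+1, (sigma x); split=> //; apply: synchronized_sigma cond sync.
  by rewrite -occ_w1 all_window_le2.
have t_p0 : tribonacci p0 = c by move: occ0; rewrite window_cons => -[].
have [c0|c_gt0] := posnP c.
  rewrite c0 in occ0 t_p0 measure *.
  have [q [w1 [e [_ occ_w1 decomp cond size_w1]]]] :=
    window_block_decomposition (m := size (0 :: w)) t_p0 isT.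
  have [|n [x [n_gt0 sync]]] := sync_sigma q w1 e occ_w1 cond.
    have := head_window tribonacci q (size w1); rewrite occ_w1 /= in size_w1 measure *.
    by have := tribonacci_le2 q; lia.
  by exists n, x; rewrite -occ0 decomp.
have [q p0E] : exists q, p0 = (block_start q).+1 by apply: tribonacci_gt0; rewrite t_p0.
have occ1 : tw (block_start q) (size [:: 0, c & w]) = [:: 0, c & w].
  by rewrite window_cons tribonacci_block_start -p0E occ0.
have [q' [w1 [e [qE occ_w1 decomp cond size_w1]]]] :=
  window_block_decomposition (m := size [:: 0, c & w]) (tribonacci_block_start q) isT.
have tq'_lt_c : tribonacci q' < c.
  move: c_gt0; rewrite -t_p0 p0E qE tribonacci_block_next.
  by case: (tribonacci q') => [|[|[|]]].
have [|n [x [n_gt0 sync]]] := sync_sigma q' w1 e occ_w1 cond.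
  have := head_window tribonacci q' (size w1).
  by rewrite occ_w1 /= in size_w1 measure *; lia.
exists n, (rcons x 0); split=> [_ //|]; apply: synchronized_behead c_gt0 _.
by rewrite -occ1 decomp.
Qed.

Lemma iter_sigma_cat n s r : iter n sigma (s ++ r) = iter n sigma s ++ iter n sigma r.
Proof. by elim: n => //= n ->; rewrite sigma_cat. Qed.

Definition len_sigma n s := size (iter n sigma s).

Lemma len_sigma_cons n a b s :
  len_sigma n [:: a, b & s] = len_sigma n [:: a] + len_sigma n (b :: s).
Proof. by rewrite /len_sigma -cat1s iter_sigma_cat size_cat. Qed.

Lemma len_sigma_ge n s : size s <= len_sigma n s.
Proof. by elim: n => //= n /leq_trans; apply; apply: size_sigma. Qed.

Lemma len_sigma1S n a : len_sigma n.+1 [:: a] = len_sigma n (trib_sigma a).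
Proof. by rewrite /len_sigma iterSr sigma1. Qed.

Lemma len_sigma_letters n : 0 < n ->
  len_sigma n [:: 2] < len_sigma n [:: 1] <= len_sigma n [:: 0].
Proof.
case: n => // n _; elim: n => [//|n /andP [lt21 le10]].
have len2_gt0 : 0 < len_sigma n.+1 [:: 2] := len_sigma_ge n.+1 [:: 2].
rewrite !(len_sigma1S n.+1); cbn [trib_sigma]; rewrite !len_sigma_cons; lia.
Qed.

Lemma iter_block_start n j : iter n block_start j = len_sigma n (tw 0 j).
Proof.
elim: n j => [|n IHn] j; first by rewrite /len_sigma size_window.
by rewrite iterSr IHn sigma_prefix /len_sigma -iterSr.
Qed.

Lemma iter_block_startD n j L :
  iter n block_start (j + L) = iter n block_start j + len_sigma n (tw j L).
Proof. by rewrite !iter_block_start windowD /len_sigma iter_sigma_cat size_cat. Qed.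

Lemma tribonacci_windows_23_4 :
  tw 23 5 = [:: 2; 0; 1; 0; 2] /\ tw 4 5 = [:: 0; 1; 0; 0; 1].
Proof.
have size8 : size (trib_iter 8) = 149 by vm_compute.
by rewrite !(window_trib_iter (m := 8)) ?size8 //; vm_compute.
Qed.

Theorem theorem23 : forall k : nat, (1 <= k)%N -> totally_unbalanced tribonacci k 1.
Proof.
move=> k k_gt0 w size_w factor_w.
have [n [x [n_gt0 [occ_at occ_only]]]] := factor_synchronized factor_w.
have {}n_gt0 : 0 < n by apply: n_gt0; rewrite -size_eq0 size_w -lt0n.
apply: (@unbalanced_of_gap _ _ (iter n block_start) (size x) _ _ 23 4 5).
- move=> i; rewrite -[i.+1]addn1 iter_block_startD.
  by have := len_sigma_ge n (tw i 1); rewrite size_window; lia.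
- move=> p; split=> [/eqP/occ_only //|[i ->]]; apply/eqP.
  by apply: window_suffix; rewrite size_cat occ_at.
- rewrite !iter_block_startD !addKn.
  have [-> ->] := tribonacci_windows_23_4.
  have := len_sigma_letters n_gt0; rewrite !len_sigma_cons; lia.
Qed.
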